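(* Let $\mathbb V$ be the 2-vector space of a 2-term complex $V_1\xrightarrow{\mathrm d}V_0$ and $\mu=(\mu_0,\mu_1,\mu_2)$ an isomorphism of Lie 2-algebras $\mathfrak{gl}(\mathbb V)\to\mathfrak{gl}(\mathbb V)$. For objects $e_1=A+u$, $e_2=B+v$, $e_3=C+w$ of $\mathfrak{gl}(\mathbb V)\oplus\mathbb V$, set $J_{e_1,e_2,e_3}=[[A,B],C]+\mu_2(A,B)(w)$, where $[[A,B],C]$ denotes the identity morphism of $[[A,B],C]$ in $\mathfrak{gl}(\mathbb V)$ and $\mu_2(A,B)(w)$ is the action of the morphism $\mu_2(A,B)$ on the identity morphism of $w$. Then $J_{e_1,e_2,e_3}$ is a morphism from $\{\{e_1,e_2\}_\mu,e_3\}_\mu$ to $\{e_1,\{e_2,e_3\}_\mu\}_\mu-\{e_2,\{e_1,e_3\}_\mu\}_\mu$, and $J$ is a natural transformation between these two trilinear functors.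
   Context: All vector spaces are finite-dimensional over $\mathbb R$. A 2-vector space is a category internal to vector spaces. For a 2-term complex $V_1\xrightarrow{\mathrm d}V_0$, $\mathbb V$ has objects $V_0$, morphisms $V_0\oplus V_1$ ($u+m$), $s(u+m)=u$, $t(u+m)=u+\mathrm dm$, composition $(u+m)\cdot(u+\mathrm dm+n)=u+m+n$. Let $\mathrm{End}^0_{\mathrm d}(\mathbb V)=\{A=(A_0,A_1):A_0\mathrm d=\mathrm dA_1\}$, $\mathrm{End}^1(\mathbb V)=\mathrm{Hom}(V_0,V_1)$, $\delta\phi=(\mathrm d\phi,\phi\mathrm d)$; brackets $[A,B]$ componentwise commutator, $[A,\phi]=-[\phi,A]=A_1\phi-\phi A_0$, $[\phi,\psi]_\delta=\phi\mathrm d\psi-\psi\mathrm d\phi$. The strict Lie 2-algebra $\mathfrak{gl}(\mathbb V)$ has objects $\mathrm{End}^0_{\mathrm d}(\mathbb V)$, morphisms $A+\phi$, $s(A+\phi)=A$, $t(A+\phi)=A+\delta\phi$, bracket $[A+\phi,B+\psi]=[A,B]+[\phi,\psi]_\delta+[A,\psi]+[\phi,B]$, and acts on $\mathbb V$ by $A(u)=A_0u$, $(A+\phi)(u+m)=A_0u+(A_1m+\phi(u+\mathrm dm))$. A Lie 2-algebra is a 2-vector space $C$ with a skew-symmetric bilinear functor $[\cdot,\cdot]$ and a skew-symmetric trilinear natural isomorphism (Jacobiator) $J_{x,y,z}:[[x,y],z]\to[x,[y,z]]+[[x,z],y]$ satisfying the Jacobiator identity $J_{[w,x],y,z}([J_{w,x,z},y]+1)(J_{w,[x,z],y}+J_{[w,z],x,y}+J_{w,x,[y,z]})=[J_{w,x,y},z](J_{[w,y],x,z}+J_{w,[x,y],z})([J_{w,y,z},x]+1)([w,J_{x,y,z}]+1)$;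 it is strict when $J$ is the identity. A Lie 2-algebra morphism $\mu:C\to C'$ is a linear functor $(\mu_0,\mu_1)$ (object and morphism maps) with a skew-symmetric bilinear natural transformation $\mu_2(u,v):\mu_0[u,v]\to[\mu_0u,\mu_0v]$ such that for all objects $u,v,w$ the composites $\mu_0[[u,v],w]\xrightarrow{\mu_2([u,v],w)}[\mu_0[u,v],\mu_0w]\xrightarrow{[\mu_2(u,v),1]}[[\mu_0u,\mu_0v],\mu_0w]\xrightarrow{J}[\mu_0u,[\mu_0v,\mu_0w]]+[\mu_0v,[\mu_0w,\mu_0u]]$ and $\mu_0[[u,v],w]\xrightarrow{\mu_1J_{u,v,w}}\mu_0[u,[v,w]]+\mu_0[v,[w,u]]\xrightarrow{\mu_2(u,[v,w])+\mu_2(v,[w,u])}[\mu_0u,\mu_0[v,w]]+[\mu_0v,\mu_0[w,u]]\xrightarrow{[1,\mu_2(v,w)]+[1,\mu_2(w,u)]}[\mu_0u,[\mu_0v,\mu_0w]]+[\mu_0v,[\mu_0w,\mu_0u]]$ coincide; it is an isomorphism if $(\mu_0,\mu_1)$ is an isomorphism of 2-vector spaces. The twisted bracket on $\mathfrak{gl}(\mathbb V)\oplus\mathbb V$ is $\{A+\phi+u+m,B+\psi+v+n\}_\mu=[A+\phi,B+\psi]+\mu_1(A+\phi)(v+n)$ on morphisms and $\{A+u,B+v\}_\mu=[A,B]+\mu_0(A)(v)$ on objects. *)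

(* V_0 = 'cV[R]_n0, V_1 = 'cV[R]_n1, d : 'M_(n0,n1);
   linear maps are represented by matrices acting on column vectors. *)
From HB Require Import structures.
From mathcomp Require Import all_boot all_order all_algebra.
Set Implicit Arguments. Unset Strict Implicit. Unset Printing Implicit Defensive.
Import Order.TTheory GRing.Theory Num.Theory.
Local Open Scope ring_scope.

Section Gl.
Variables (R : realFieldType) (n0 n1 : nat) (d : 'M[R]_(n0, n1)).

Definition endo := ('M[R]_n0 * 'M[R]_n1)%type.
Definition End0d (A : endo) : Prop := A.1 *m d = d *m A.2.
Definition hom1 := 'M[R]_(n1, n0).
Definition glmor := (endo * hom1)%type.
Definition is_glmor (f : glmor) : Prop := End0d f.1.

Definition gl_delta (phi : hom1) : endo := (d *m phi, phi *m d).
Definition gl_src (f : glmor) : endo := f.1.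
Definition gl_tgt (f : glmor) : endo := f.1 + gl_delta f.2.
Definition gl_id (A : endo) : glmor := (A, 0).
(* (A + phi) . (A + delta phi + psi) = A + phi + psi  (diagrammatic order) *)
Definition gl_comp (f g : glmor) : glmor := (f.1, f.2 + g.2).

Definition gl_br (A B : endo) : endo :=
  (A.1 *m B.1 - B.1 *m A.1, A.2 *m B.2 - B.2 *m A.2).
Definition gl_act1 (A : endo) (psi : hom1) : hom1 := A.2 *m psi - psi *m A.1.
Definition gl_brd (phi psi : hom1) : hom1 := phi *m d *m psi - psi *m d *m phi.
(* [A+phi, B+psi] = [A,B] + [phi,psi]_delta + [A,psi] + [phi,B],  [phi,B] = -[B,phi] *)
Definition gl_brm (f g : glmor) : glmor :=
  (gl_br f.1 g.1, gl_brd f.2 g.2 + gl_act1 f.1 g.2 - gl_act1 g.1 f.2).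

Definition vobj := 'cV[R]_n0.
Definition vmor := ('cV[R]_n0 * 'cV[R]_n1)%type.
Definition v_id (u : vobj) : vmor := (u, 0).
Definition act0 (A : endo) (u : vobj) : vobj := A.1 *m u.
Definition act1 (f : glmor) (x : vmor) : vmor :=
  (f.1.1 *m x.1, f.1.2 *m x.2 + f.2 *m (x.1 + d *m x.2)).

(** ---- mu = (mu0, mu1, mu2) : gl(V) -> gl(V) is an isomorphism of Lie 2-algebras.
   The Jacobiator of gl(V) is the identity (gl(V) is strict). *)
Definition lie2_iso (mu0 : endo -> endo) (mu1 : glmor -> glmor)
    (mu2 : endo -> endo -> glmor) : Prop :=
  (forall A, End0d A -> End0d (mu0 A)) /\
  (forall f, is_glmor f -> is_glmor (mu1 f)) /\
  (forall (a : R) A B, End0d A -> End0d B -> mu0 (a *: A + B) = a *: mu0 A + mu0 B) /\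
  (forall (a : R) f g, is_glmor f -> is_glmor g ->
      mu1 (a *: f + g) = a *: mu1 f + mu1 g) /\
  (forall f, is_glmor f -> gl_src (mu1 f) = mu0 (gl_src f)) /\
  (forall f, is_glmor f -> gl_tgt (mu1 f) = mu0 (gl_tgt f)) /\
  (forall A, End0d A -> mu1 (gl_id A) = gl_id (mu0 A)) /\
  (forall f g, is_glmor f -> is_glmor g -> gl_tgt f = gl_src g ->
      mu1 (gl_comp f g) = gl_comp (mu1 f) (mu1 g)) /\
  (forall A B, End0d A -> End0d B -> is_glmor (mu2 A B)) /\
  (forall A B, End0d A -> End0d B -> gl_src (mu2 A B) = mu0 (gl_br A B)) /\
  (forall A B, End0d A -> End0d B -> gl_tgt (mu2 A B) = gl_br (mu0 A) (mu0 B)) /\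
  (forall A B, End0d A -> End0d B -> mu2 B A = - mu2 A B) /\
  (forall (a : R) A A' B, End0d A -> End0d A' -> End0d B ->
      mu2 (a *: A + A') B = a *: mu2 A B + mu2 A' B) /\
  (forall (a : R) A B B', End0d A -> End0d B -> End0d B' ->
      mu2 A (a *: B + B') = a *: mu2 A B + mu2 A B') /\
  (forall f g, is_glmor f -> is_glmor g ->
      gl_comp (mu1 (gl_brm f g)) (mu2 (gl_tgt f) (gl_tgt g)) =
      gl_comp (mu2 (gl_src f) (gl_src g)) (gl_brm (mu1 f) (mu1 g))) /\
  (* coherence with the (identity) Jacobiators *)
  (forall u v w, End0d u -> End0d v -> End0d w ->
      gl_comp (gl_comp (mu2 (gl_br u v) w) (gl_brm (mu2 u v) (gl_id (mu0 w))))
              (gl_id (gl_br (gl_br (mu0 u) (mu0 v)) (mu0 w))) =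
      gl_comp (gl_comp (mu1 (gl_id (gl_br (gl_br u v) w)))
                       (mu2 u (gl_br v w) + mu2 v (gl_br w u)))
              (gl_brm (gl_id (mu0 u)) (mu2 v w) + gl_brm (gl_id (mu0 v)) (mu2 w u))) /\
  (forall A B, End0d A -> End0d B -> mu0 A = mu0 B -> A = B) /\
  (forall B, End0d B -> exists2 A, End0d A & mu0 A = B) /\
  (forall f g, is_glmor f -> is_glmor g -> mu1 f = mu1 g -> f = g) /\
  (forall g, is_glmor g -> exists2 f, is_glmor f & mu1 f = g).

Definition sobj := (endo * vobj)%type.
Definition smor := (glmor * vmor)%type.
Definition is_sobj (e : sobj) : Prop := End0d e.1.
Definition is_smor (f : smor) : Prop := is_glmor f.1.
Definition s_src (f : smor) : sobj := (gl_src f.1, f.2.1).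
Definition s_tgt (f : smor) : sobj := (gl_tgt f.1, f.2.1 + d *m f.2.2).
Definition s_comp (f g : smor) : smor := (gl_comp f.1 g.1, (f.2.1, f.2.2 + g.2.2)).

Definition tbr0 (mu0 : endo -> endo) (e1 e2 : sobj) : sobj :=
  (gl_br e1.1 e2.1, act0 (mu0 e1.1) e2.2).
Definition tbr1 (mu1 : glmor -> glmor) (f g : smor) : smor :=
  (gl_brm f.1 g.1, act1 (mu1 f.1) g.2).

Definition Fobj mu0 (e1 e2 e3 : sobj) := tbr0 mu0 (tbr0 mu0 e1 e2) e3.
Definition Gobj mu0 (e1 e2 e3 : sobj) :=
  tbr0 mu0 e1 (tbr0 mu0 e2 e3) - tbr0 mu0 e2 (tbr0 mu0 e1 e3).
Definition Fmor mu1 (f1 f2 f3 : smor) := tbr1 mu1 (tbr1 mu1 f1 f2) f3.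
Definition Gmor mu1 (f1 f2 f3 : smor) :=
  tbr1 mu1 f1 (tbr1 mu1 f2 f3) - tbr1 mu1 f2 (tbr1 mu1 f1 f3).

Definition Jmap (mu2 : endo -> endo -> glmor) (e1 e2 e3 : sobj) : smor :=
  (gl_id (gl_br (gl_br e1.1 e2.1) e3.1), act1 (mu2 e1.1 e2.1) (v_id e3.2)).

End Gl.

From HB Require Import structures.
From mathcomp Require Import all_boot all_order all_algebra.
From mathcomp Require Import ring.
Set Implicit Arguments. Unset Strict Implicit. Unset Printing Implicit Defensive.
Import Order.TTheory GRing.Theory Num.Theory.
Local Open Scope ring_scope.

(* gl(V) is a strict Lie 2-algebra, and its action on V is a functor which on
   morphisms is a Lie algebra action.  Hence the source and target of J are the two
   sides of the Jacobi identity for the twisted bracket, except that one side acts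
   through mu0 [A,B] and the other through [mu0 A, mu0 B]; mu2(A,B) is a morphism
   between exactly these.  Naturality of J is the naturality of mu2, transported
   through the action by functoriality. *)

(* Identities in an abelian group [V] are decided by [ring] in the square-zero
   extension [int * V], a commutative ring into which [V] embeds additively. *)
Section SquareZeroExtension.
Variable V : zmodType.

Definition sqz := (int * V)%type.
HB.instance Definition _ := GRing.Zmodule.on sqz.

Definition sqz_one : sqz := (1, 0).
Definition sqz_mul (x y : sqz) : sqz := (x.1 * y.1, x.2 *~ y.1 + y.2 *~ x.1).

Lemma sqz_mulA : associative sqz_mul.
Proof.
move=> [a x] [b y] [c z]; congr (_, _); rewrite /= ?mulrA //.
by rewrite !mulrzDl !mulrzA -addrA [y *~ a *~ c]mulrzAC [z *~ a *~ b]mulrzAC.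
Qed.

Lemma sqz_mulC : commutative sqz_mul.
Proof. by move=> [a x] [b y]; rewrite /sqz_mul /= mulrC addrC. Qed.

Lemma sqz_mul1 : left_id sqz_one sqz_mul.
Proof. by move=> [a x]; rewrite /sqz_mul /= mul1r mulr1z mul0rz add0r. Qed.

Lemma sqz_mulDl : left_distributive sqz_mul +%R.
Proof.
move=> [a x] [b y] [c z]; congr (_, _); rewrite /= ?mulrDl //.
by rewrite mulrzDr mulrzDl -!addrA; congr (_ + _); rewrite addrCA.
Qed.

Lemma sqz_one_neq0 : sqz_one != 0.
Proof. by []. Qed.

HB.instance Definition _ := GRing.Zmodule_isComNzRing.Build sqz
  sqz_mulA sqz_mulC sqz_mul1 sqz_mulDl sqz_one_neq0.

Definition sqz_in (x : V) : sqz := (0, x).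

Lemma sqz_in_is_zmod_morphism : zmod_morphism sqz_in.
Proof. by move=> x y; congr (_, _); rewrite /= subr0. Qed.

HB.instance Definition _ :=
  GRing.isZmodMorphism.Build V sqz sqz_in sqz_in_is_zmod_morphism.

Lemma sqz_in_inj : injective sqz_in.
Proof. by move=> x y []. Qed.

End SquareZeroExtension.

Ltac zmod_ring := apply: sqz_in_inj; ring.

Ltac mx_expand :=
  rewrite ?(mulmxDl, mulmxDr, mulmxBl, mulmxBr, mulmxN, mulNmx, mulmxA,
            mulmx0, mul0mx, addr0, add0r).

Section GlAction.
Variables (R : realFieldType) (n0 n1 : nat) (d : 'M[R]_(n0, n1)).
Implicit Types (A B C : endo R n0 n1) (f g h : glmor R n0 n1) (x y : vmor R n0 n1).

Lemma End0d_mul A : End0d d A -> forall k (X : 'M[R]_(k, n0)),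
  X *m A.1 *m d = X *m d *m A.2.
Proof. by move=> hA k X; rewrite -!mulmxA hA. Qed.

Lemma End0d_br A B : End0d d A -> End0d d B -> End0d d (gl_br A B).
Proof.
move=> hA hB; rewrite /End0d /=; mx_expand.
rewrite ?(hA, hB, End0d_mul hA, End0d_mul hB); zmod_ring.
Qed.

Lemma End0d_tgt f : End0d d f.1 -> End0d d (gl_tgt d f).
Proof.
by move=> hf; rewrite /End0d /= mulmxDl mulmxDr hf !mulmxA.
Qed.

Lemma gl_br_jacobi A B C :
  gl_br (gl_br A B) C = gl_br A (gl_br B C) - gl_br B (gl_br A C).
Proof. by congr (_, _); rewrite /=; mx_expand; zmod_ring. Qed.

Lemma gl_brm_jacobi f g h : End0d d f.1 -> End0d d g.1 -> End0d d h.1 ->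
  gl_brm d (gl_brm d f g) h = gl_brm d f (gl_brm d g h) - gl_brm d g (gl_brm d f h).
Proof.
move=> hf hg hh; congr (_, _); first exact: gl_br_jacobi.
rewrite /= /gl_brd /gl_act1 /=; mx_expand.
rewrite ?(hf, hg, hh, End0d_mul hf, End0d_mul hg, End0d_mul hh); zmod_ring.
Qed.

Lemma gl_tgt_brm f g : End0d d f.1 -> End0d d g.1 ->
  gl_tgt d (gl_brm d f g) = gl_br (gl_tgt d f) (gl_tgt d g).
Proof.
move=> hf hg; congr (_, _); rewrite /= /gl_brd /gl_act1 /=; mx_expand;
  rewrite ?(hf, hg, End0d_mul hf, End0d_mul hg); zmod_ring.
Qed.

Lemma act0_br A B (u : vobj R n0) :
  act0 (gl_br A B) u = act0 A (act0 B u) - act0 B (act0 A u).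
Proof. by rewrite /act0 /= mulmxBl !mulmxA. Qed.

Lemma act1_brm f g x : End0d d f.1 -> End0d d g.1 ->
  act1 d (gl_brm d f g) x = act1 d f (act1 d g x) - act1 d g (act1 d f x).
Proof.
move=> hf hg; congr (_, _); rewrite /= ?/gl_brd ?/gl_act1 /=; mx_expand;
  rewrite ?(hf, hg, End0d_mul hf, End0d_mul hg); zmod_ring.
Qed.

Lemma act1_tgt f x : End0d d f.1 ->
  (act1 d f x).1 + d *m (act1 d f x).2 = act0 (gl_tgt d f) (x.1 + d *m x.2).
Proof.
move=> hf; rewrite /act0 /=; mx_expand; rewrite hf; zmod_ring.
Qed.

Definition v_comp x y : vmor R n0 n1 := (x.1, x.2 + y.2).

Lemma act1_comp f g x y : gl_tgt d f = gl_src g -> y.1 = x.1 + d *m x.2 ->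
  act1 d (gl_comp f g) (v_comp x y) = v_comp (act1 d f x) (act1 d g y).
Proof.
move=> fg xy; congr (_, _); rewrite /= xy -(congr1 snd fg) /=; mx_expand; zmod_ring.
Qed.

Lemma v_comp_idl (u : vobj R n0) x : x.1 = u -> v_comp (v_id n1 u) x = x.
Proof. by case: x => ? ? /= <-; rewrite /v_comp /= add0r. Qed.

Lemma v_comp_idr (u : vobj R n0) x : v_comp x (v_id n1 u) = x.
Proof. by case: x => ? ?; rewrite /v_comp /= addr0. Qed.

End GlAction.

Section TwistedJacobiator.
Variables (R : realFieldType) (n0 n1 : nat) (d : 'M[R]_(n0, n1)).
Variables (mu0 : endo R n0 n1 -> endo R n0 n1) (mu1 : glmor R n0 n1 -> glmor R n0 n1)
  (mu2 : endo R n0 n1 -> endo R n0 n1 -> glmor R n0 n1).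
Hypothesis mu1_glmor : forall f, is_glmor d f -> is_glmor d (mu1 f).
Hypothesis mu1_src : forall f, is_glmor d f -> gl_src (mu1 f) = mu0 (gl_src f).
Hypothesis mu1_tgt : forall f, is_glmor d f -> gl_tgt d (mu1 f) = mu0 (gl_tgt d f).
Hypothesis mu2_glmor : forall A B, End0d d A -> End0d d B -> is_glmor d (mu2 A B).
Hypothesis mu2_src :
  forall A B, End0d d A -> End0d d B -> gl_src (mu2 A B) = mu0 (gl_br A B).
Hypothesis mu2_tgt :
  forall A B, End0d d A -> End0d d B -> gl_tgt d (mu2 A B) = gl_br (mu0 A) (mu0 B).
Hypothesis mu2_natural : forall f g, is_glmor d f -> is_glmor d g ->
  gl_comp (mu1 (gl_brm d f g)) (mu2 (gl_tgt d f) (gl_tgt d g)) =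
  gl_comp (mu2 (gl_src f) (gl_src g)) (gl_brm d (mu1 f) (mu1 g)).
Implicit Types (e : sobj R n0 n1) (f g : smor R n0 n1).

Lemma is_smor_tbr1 f g : is_smor d f -> is_smor d g -> is_smor d (tbr1 d mu1 f g).
Proof. exact: End0d_br. Qed.

Lemma is_sobj_tgt f : is_smor d f -> is_sobj d (s_tgt d f).
Proof. exact: End0d_tgt. Qed.

Lemma s_src_tbr1 f g : is_smor d f ->
  s_src (tbr1 d mu1 f g) = tbr0 mu0 (s_src f) (s_src g).
Proof. by move=> hf; rewrite /s_src /tbr0 /act0 /= -mu1_src. Qed.

Lemma s_tgt_tbr1 f g : is_smor d f -> is_smor d g ->
  s_tgt d (tbr1 d mu1 f g) = tbr0 mu0 (s_tgt d f) (s_tgt d g).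
Proof.
move=> hf hg; rewrite /s_tgt /tbr0 /tbr1; congr (_, _); first exact: gl_tgt_brm.
by rewrite act1_tgt ?mu1_tgt //; exact: mu1_glmor.
Qed.

Lemma Jmap_src e1 e2 e3 : is_sobj d e1 -> is_sobj d e2 ->
  s_src (Jmap d mu2 e1 e2 e3) = Fobj mu0 e1 e2 e3.
Proof. by move=> h1 h2; rewrite /s_src /Fobj /tbr0 /act0 /= -mu2_src. Qed.

Lemma Jmap_tgt e1 e2 e3 : is_sobj d e1 -> is_sobj d e2 ->
  s_tgt d (Jmap d mu2 e1 e2 e3) = Gobj mu0 e1 e2 e3.
Proof.
move=> h1 h2; rewrite /s_tgt /Gobj /tbr0 /Jmap; congr (_, _).
  by rewrite /gl_tgt /gl_delta /= mulmx0 mul0mx addr0 gl_br_jacobi.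
rewrite act1_tgt ?mu2_tgt ?act0_br /= ?mulmx0 ?addr0 //; exact: mu2_glmor.
Qed.

Lemma s_tgt_Fmor f1 f2 f3 : is_smor d f1 -> is_smor d f2 -> is_smor d f3 ->
  s_tgt d (Fmor d mu1 f1 f2 f3) = Fobj mu0 (s_tgt d f1) (s_tgt d f2) (s_tgt d f3).
Proof.
by move=> h1 h2 h3; rewrite /Fmor !s_tgt_tbr1 //; exact: is_smor_tbr1.
Qed.

Lemma s_src_Gmor f1 f2 f3 : is_smor d f1 -> is_smor d f2 ->
  s_src (Gmor d mu1 f1 f2 f3) = Gobj mu0 (s_src f1) (s_src f2) (s_src f3).
Proof. by move=> h1 h2; rewrite /Gobj -!s_src_tbr1. Qed.

Lemma Jmap_natural f1 f2 f3 : is_smor d f1 -> is_smor d f2 -> is_smor d f3 ->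
  s_comp (Fmor d mu1 f1 f2 f3) (Jmap d mu2 (s_tgt d f1) (s_tgt d f2) (s_tgt d f3)) =
  s_comp (Jmap d mu2 (s_src f1) (s_src f2) (s_src f3)) (Gmor d mu1 f1 f2 f3).
Proof.
move=> h1 h2 h3; congr (_, _).
  have -> : (Fmor d mu1 f1 f2 f3).1 = (Gmor d mu1 f1 f2 f3).1 by exact: gl_brm_jacobi.
  rewrite /gl_comp /gl_id addr0 add0r; congr (_, _).
  by rewrite /= gl_br_jacobi.
change (v_comp (act1 d (mu1 (gl_brm d f1.1 f2.1)) f3.2)
          (act1 d (mu2 (gl_tgt d f1.1) (gl_tgt d f2.1)) (v_id n1 (f3.2.1 + d *m f3.2.2))) =
        v_comp (act1 d (mu2 f1.1.1 f2.1.1) (v_id n1 f3.2.1))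
          (act1 d (mu1 f1.1) (act1 d (mu1 f2.1) f3.2) -
           act1 d (mu1 f2.1) (act1 d (mu1 f1.1) f3.2))).
(* Each side is the action of one of the two equal composites in the naturality
   square of mu2. *)
rewrite -act1_brm; try exact: mu1_glmor.
have lhs_composable : gl_tgt d (mu1 (gl_brm d f1.1 f2.1)) =
          gl_src (mu2 (gl_tgt d f1.1) (gl_tgt d f2.1)).
  rewrite mu1_tgt ?gl_tgt_brm ?mu2_src //; [exact: End0d_tgt.. | exact: End0d_br].
have rhs_composable : gl_tgt d (mu2 f1.1.1 f2.1.1) = gl_src (gl_brm d (mu1 f1.1) (mu1 f2.1)).
  by rewrite mu2_tgt // /gl_src /= -!mu1_src.
rewrite -act1_comp // v_comp_idr -act1_comp ?v_comp_idl /= ?mulmx0 ?addr0 //.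
by rewrite mu2_natural.
Qed.

End TwistedJacobiator.

Theorem mainTheorem13 (R : realFieldType) (n0 n1 : nat) (d : 'M[R]_(n0, n1))
    (mu0 : endo R n0 n1 -> endo R n0 n1) (mu1 : glmor R n0 n1 -> glmor R n0 n1)
    (mu2 : endo R n0 n1 -> endo R n0 n1 -> glmor R n0 n1) :
  lie2_iso d mu0 mu1 mu2 ->
  (forall e1 e2 e3 : sobj R n0 n1,
      is_sobj d e1 -> is_sobj d e2 -> is_sobj d e3 ->
      s_src (Jmap d mu2 e1 e2 e3) = Fobj mu0 e1 e2 e3 /\
      s_tgt d (Jmap d mu2 e1 e2 e3) = Gobj mu0 e1 e2 e3) /\
  (forall f1 f2 f3 : smor R n0 n1,
      is_smor d f1 -> is_smor d f2 -> is_smor d f3 ->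
      s_tgt d (Fmor d mu1 f1 f2 f3) =
        s_src (Jmap d mu2 (s_tgt d f1) (s_tgt d f2) (s_tgt d f3)) /\
      s_tgt d (Jmap d mu2 (s_src f1) (s_src f2) (s_src f3)) =
        s_src (Gmor d mu1 f1 f2 f3) /\
      s_comp (Fmor d mu1 f1 f2 f3) (Jmap d mu2 (s_tgt d f1) (s_tgt d f2) (s_tgt d f3)) =
      s_comp (Jmap d mu2 (s_src f1) (s_src f2) (s_src f3)) (Gmor d mu1 f1 f2 f3)).
Proof.
case=> _ [mu1_glmor [_ [_ [mu1_src [mu1_tgt [_ [_ [mu2_glmor [mu2_src [mu2_tgt
  [_ [_ [_ [mu2_natural _]]]]]]]]]]]]]].
split=> [e1 e2 e3 h1 h2 _ | f1 f2 f3 h1 h2 h3].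
  by split; [exact: Jmap_src | exact: Jmap_tgt].
split; [|split].
- by rewrite (s_tgt_Fmor mu1_glmor mu1_tgt) // (Jmap_src mu2_src) //; exact: is_sobj_tgt.
- by rewrite (Jmap_tgt mu2_glmor mu2_tgt) // (s_src_Gmor mu1_src).
- exact: (Jmap_natural mu1_glmor mu1_src mu1_tgt mu2_src mu2_tgt mu2_natural).
Qed.
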